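(* Let $p$ be a prime with $p\notin\{2,3,7,43\}$. Then $\mathcal{M}_p^{(2)}=\emptyset$.
   Context: For positive integers $k,n$ let $S_k(n)=\sum_{i=1}^{n} i^k$. For an integer $a$, $\mathcal{M}_a$ denotes the set of positive integers $n$ such that $S_n(n)\equiv a\pmod{n}$. For a prime $p$, $\mathcal{M}_p^{(2)}=\{n\in\mathcal{M}_p : p^2\mid n,\ p^3\nmid n\}$. *)

From mathcomp Require Import all_boot.
Set Implicit Arguments. Unset Strict Implicit. Unset Printing Implicit Defensive.

Definition S (k n : nat) : nat := \sum_(1 <= i < n.+1) i ^ k.

Definition inM (a n : nat) : Prop := 0 < n /\ S n n = a %[mod n].

Definition inM2 (p n : nat) : Prop := inM p n /\ p ^ 2 %| n /\ ~~ (p ^ 3 %| n).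

From mathcomp Require Import all_boot all_algebra all_field.
Import GRing.Theory.
Set Implicit Arguments. Unset Strict Implicit. Unset Printing Implicit Defensive.

(* Modulo a divisor d of n, S_n(n) consists of n/d full periods of
   sum_{i<d} i^n.  For a prime q | n this period vanishes mod q unless
   q - 1 | n (a power sum over F_q), so q - 1 | n when q does not divide p,
   and q^2 cannot divide n since then q | n/q.  For q = p one uses the period
   p^2: by the binomial theorem it is p * sum_{i<p} i^n mod p^2, so again
   p - 1 | n.  Hence r - 1 | n for every prime r | n, and strong induction on r
   shows that r - 1 is a squarefree product of primes from {2,3,7,43}, i.e.
   divides 1806; a finite check then puts every prime divisor of n, p included,
   in {2,3,7,43}. *)

Section FinFieldPowerSums.
Local Open Scope ring_scope.
Variable F : finFieldType.

Lemma expf_card_pred (x : F) : x != 0 -> x ^+ #|F|.-1 = 1.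
Proof.
move=> x_nz; apply: (mulfI x_nz); rewrite mulr1 -exprS prednK ?expf_card //.
by apply: ltnW (finNzRing_gt1 F).
Qed.

Lemma exists_expf_neq1 k :
  ~~ (#|F|.-1 %| k)%N -> exists2 a : F, a != 0 & a ^+ k != 1.
Proof.
move=> ndvd_k; case: (pickP (fun a : F => (a != 0) && (a ^+ k != 1))).
  by move=> a /andP[]; exists a.
move=> all1; case/negP: ndvd_k; set d := #|F|.-1.
have d_gt0 : (0 < d)%N by rewrite /d -subn1 subn_gt0 finNzRing_gt1.
apply: contraT => ndvd_k; have r_gt0 : (0 < k %% d)%N by rewrite lt0n.
have unity_r (x : F) : x != 0 -> x ^+ (k %% d) = 1.
  move=> x_nz; have /negbT := all1 x; rewrite x_nz negbK => /eqP.
  by rewrite {1}(divn_eq k d) exprD mulnC exprM expf_card_pred // expr1n mul1r.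
have := @max_unity_roots F (k %% d) (enum (predC1 0)) r_gt0.
rewrite enum_uniq -cardE cardC1 -/d leqNgt ltn_pmod //; apply => //.
by apply/allP=> x; rewrite mem_enum => x_nz; apply/unity_rootP/unity_r.
Qed.

Lemma sum_expf_eq0 k : ~~ (#|F|.-1 %| k)%N -> \sum_(x : F) x ^+ k = 0.
Proof.
move=> ndvd_k; have [a a_nz ak_neq1] := exists_expf_neq1 ndvd_k.
have scaled : \sum_(x : F) x ^+ k = a ^+ k * \sum_(x : F) x ^+ k.
  rewrite [LHS](reindex_inj (mulfI a_nz)) /= mulr_sumr.
  by apply: eq_bigr => x _; rewrite exprMn.
have /eqP : (a ^+ k - 1) * \sum_(x : F) x ^+ k = 0.
  by rewrite mulrBl -scaled mul1r subrr.
by rewrite mulf_eq0 subr_eq0 (negbTE ak_neq1) => /eqP.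
Qed.

End FinFieldPowerSums.

Lemma sum_Fp q (f : 'F_q -> 'F_q) :
  prime q -> (\sum_(x : 'F_q) f x = \sum_(0 <= i < q) f i%:R)%R.
Proof.
move=> q_pr; transitivity (\sum_(0 <= i < (Zp_trunc (pdiv q)).+2) f i%:R)%R.
  by rewrite big_mkord; apply: eq_bigr => x _; rewrite natr_Zp.
by rewrite Fp_cast.
Qed.

Lemma prime_dvd_sum_expn q k :
  prime q -> ~~ (q.-1 %| k) -> q %| \sum_(0 <= i < q) i ^ k.
Proof.
move=> q_pr ndvd_k; rewrite (dvdn_pcharf (pchar_Fp q_pr)) natr_sum.
under eq_bigr do rewrite natrX.
by rewrite -(sum_Fp (fun x => x ^+ k)%R) // sum_expf_eq0 ?card_Fp.
Qed.

Lemma sum_periodic_mod M d c (f : nat -> nat) :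
  (forall i j, f (i + j * d) = f i %[mod M]) ->
  \sum_(0 <= i < c * d) f i = c * \sum_(0 <= i < d) f i %[mod M].
Proof.
move=> f_periodic; elim: c => [|c IHc]; first by rewrite !mul0n big_geq.
rewrite mulSnr (@big_cat_nat _ _ _ (c * d)) ?leq_addr //=.
have period : \sum_(c * d <= i < c * d + d) f i = \sum_(0 <= i < d) f i %[mod M].
  rewrite -{1}(add0n (c * d)) big_addn addKn -modn_summ.
  by under eq_bigr do rewrite f_periodic; rewrite modn_summ.
by rewrite -modnDm IHc period modnDm mulSnr.
Qed.

Lemma expn_shift_mod_sqr p n i j :
  p %| n -> (i + j * p) ^ n = i ^ n %[mod p ^ 2].
Proof.
move=> p_dvd_n; rewrite expnDn big_ord_recl /= bin0 subn0 expn0 !mul1n muln1.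
set rest := \sum_(k < n) _.
suff /divnK <- : p ^ 2 %| rest by rewrite addnC modnMDl.
apply: dvdn_sum => -[[|k] lt_k_n] _; rewrite /bump /= add1n.
  by rewrite bin1 expn1 -mulnn mulnCA dvdn_mull // dvdn_mul // dvdn_mull.
by rewrite expnMn; do 3!apply: dvdn_mull; apply: dvdn_exp2l.
Qed.

Lemma S_diag_mod d n :
  0 < n -> d %| n -> S n n = n %/ d * \sum_(0 <= i < d) i ^ n %[mod d].
Proof.
move=> n_gt0 d_dvd_n.
have -> : S n n = \sum_(0 <= i < n) i ^ n + n ^ n.
  by rewrite /S big_nat_recr //= (big_ltn n_gt0) exp0n.
rewrite -modnDm (eqP (dvdn_exp n_gt0 d_dvd_n)) addn0 modn_mod.
rewrite -{1}(divnK d_dvd_n); apply: sum_periodic_mod => i j.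
by rewrite -modnXm addnC modnMDl modnXm.
Qed.

Lemma inM_dvd_mod a n d :
  inM a n -> d %| n -> a = n %/ d * \sum_(0 <= i < d) i ^ n %[mod d].
Proof.
move=> [n_gt0 Sn] d_dvd_n.
by rewrite -(modn_dvdm a d_dvd_n) -Sn (modn_dvdm _ d_dvd_n); apply: S_diag_mod.
Qed.

Lemma inM_prime_sqfree a n q :
  inM a n -> prime q -> ~~ (q %| a) -> ~~ (q ^ 2 %| n).
Proof.
move=> Mn q_pr; apply: contra => q2_dvd_n.
have q_dvd_n : q %| n by apply: dvdn_trans q2_dvd_n; rewrite dvdn_exp.
have q_dvd_quo : q %| n %/ q by rewrite -(@dvdn_pmul2r q) ?prime_gt0 // divnK.
by rewrite /dvdn (inM_dvd_mod Mn q_dvd_n) -/(dvdn _ _) dvdn_mulr.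
Qed.

Lemma inM_prime_pred_dvd a n q :
  inM a n -> prime q -> q %| n -> ~~ (q %| a) -> q.-1 %| n.
Proof.
move=> Mn q_pr q_dvd_n; apply: contraR => ndvd_n.
by rewrite /dvdn (inM_dvd_mod Mn q_dvd_n) -/(dvdn _ _) dvdn_mull ?prime_dvd_sum_expn.
Qed.

Lemma inM_prime_sqr_pred_dvd a n p :
  inM a n -> prime p -> p ^ 2 %| n -> ~~ (p ^ 2 %| a) -> p.-1 %| n.
Proof.
move=> Mn p_pr p2_dvd_n; apply: contraR => ndvd_n.
have p_dvd_n : p %| n by apply: dvdn_trans p2_dvd_n; rewrite dvdn_exp.
have period : \sum_(0 <= i < p * p) i ^ n = p * \sum_(0 <= i < p) i ^ n %[mod p ^ 2].
  by apply: sum_periodic_mod => i j; apply: expn_shift_mod_sqr.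
rewrite /dvdn (inM_dvd_mod Mn p2_dvd_n) -modnMmr period modnMmr -/(dvdn _ _).
by rewrite dvdn_mull // -mulnn dvdn_mul ?prime_dvd_sum_expn.
Qed.

Lemma squarefree_dvdn d N :
  0 < d -> (forall q, prime q -> q %| d -> ~~ (q ^ 2 %| d)) ->
  (forall q, prime q -> q %| d -> q %| N) -> d %| N.
Proof.
move=> d_gt0 d_sqfree dvd_N; set g := gcdn d N.
have d_eq : d = d %/ g * g by rewrite divnK ?dvdn_gcdl.
have [quo_gt1|] := ltnP 1 (d %/ g).
  have q_pr := pdiv_prime quo_gt1; set q := pdiv (d %/ g) in q_pr.
  have q_dvd_d : q %| d by rewrite d_eq dvdn_mulr ?pdiv_dvd.
  have q_dvd_g : q %| g by rewrite dvdn_gcd q_dvd_d dvd_N.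
  case/negP: (d_sqfree q q_pr q_dvd_d).
  by rewrite -mulnn [X in _ %| X]d_eq dvdn_mul ?pdiv_dvd.
rewrite leq_eqVlt ltnS leqn0 => /orP[/eqP quo1|/eqP quo0].
  by rewrite d_eq quo1 mul1n dvdn_gcdr.
by move: d_gt0; rewrite d_eq quo0.
Qed.

Lemma prime_pred_dvd_1806 r : prime r -> r.-1 %| 1806 -> r \in [:: 2; 3; 7; 43].
Proof.
move=> r_pr r_dvd; have r_small : r < 1808.
  by case: r r_dvd {r_pr} => // r /(dvdn_leq (isT : 0 < 1806)); rewrite ltnS.
have table : all (fun r => (r.-1 %| 1806) ==> prime r ==> (r \in [:: 2; 3; 7; 43]))
  (iota 0 1808) by vm_compute.
by move/allP: table => /(_ r); rewrite mem_iota r_small r_dvd r_pr => /(_ isT).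
Qed.

Lemma prime_divisors_2_3_7_43 n :
  (forall r, prime r -> r %| n -> r.-1 %| n) ->
  (forall q, q \in [:: 2; 3; 7; 43] -> ~~ (q ^ 2 %| n)) ->
  forall r, prime r -> r %| n -> r \in [:: 2; 3; 7; 43].
Proof.
move=> pred_dvd sqfree; elim/ltn_ind => r IHr r_pr r_dvd_n.
have r1_dvd_n := pred_dvd r r_pr r_dvd_n.
have r1_gt0 : 0 < r.-1 by rewrite -ltnS prednK ?prime_gt0 ?prime_gt1.
apply: prime_pred_dvd_1806 => //.
have small_divisors q : prime q -> q %| r.-1 -> q \in [:: 2; 3; 7; 43].
  move=> q_pr q_dvd; apply: IHr (dvdn_trans q_dvd r1_dvd_n) => //.
  by rewrite -(prednK (prime_gt0 r_pr)) ltnS dvdn_leq.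
apply: squarefree_dvdn => // q q_pr q_dvd.
  apply: contra (sqfree q (small_divisors q q_pr q_dvd)).
  by move=> q2_dvd; apply: dvdn_trans q2_dvd r1_dvd_n.
by move/(small_divisors q q_pr): q_dvd; rewrite !inE => /or4P[] /eqP->.
Qed.

Theorem mainTheorem6 (p : nat) :
  prime p -> p \notin [:: 2; 3; 7; 43] -> forall n : nat, ~ inM2 p n.
Proof.
move=> p_pr p_notin n [Mn [p2_dvd_n _]].
have p_ndvd_sqr : ~~ (p ^ 2 %| p).
  by rewrite -[X in _ %| X]expn1 dvdn_Pexp2l // prime_gt1.
have other_ndvd q : prime q -> q != p -> ~~ (q %| p) by move=> q_pr; rewrite dvdn_prime2.
have pred_dvd r : prime r -> r %| n -> r.-1 %| n.
  move=> r_pr r_dvd_n; have [->|r_neq_p] := eqVneq r p.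
    exact: inM_prime_sqr_pred_dvd Mn p_pr p2_dvd_n p_ndvd_sqr.
  exact: inM_prime_pred_dvd Mn r_pr r_dvd_n (other_ndvd r r_pr r_neq_p).
have sqfree q : q \in [:: 2; 3; 7; 43] -> ~~ (q ^ 2 %| n).
  move=> q_in; have q_pr : prime q by move: q_in; rewrite !inE => /or4P[] /eqP->.
  have q_neq_p : q != p by apply: contraNneq p_notin => <-.
  exact: inM_prime_sqfree Mn q_pr (other_ndvd q q_pr q_neq_p).
have p_dvd_n : p %| n by apply: dvdn_trans p2_dvd_n; rewrite dvdn_exp.
by rewrite (prime_divisors_2_3_7_43 pred_dvd sqfree p_pr p_dvd_n) in p_notin.
Qed.
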